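(* Let $m,n$ be positive integers with $2m\le n$ and let $0<\delta,p,q<1$ be real numbers such that $pn$ and $qn$ are integers. Let $S$ and $T$ be uniformly random $pn$- and $qn$-element subsets of $\{1,\ldots,n\}$, respectively, chosen independently. Let $I$ be the set of indices $i\in\{1,\ldots,m\}$ such that $|\{2i-1,2i\}\cap S|=|\{2i-1,2i\}\cap T|=1$. Then \[\mathbb{P}\big[|I|\le(1-\delta)\cdot 4p(1-p)q(1-q)m\big]\le (n+1)^2e^{-\delta^2\cdot 4p(1-p)q(1-q)m/2}.\] *)

From HB Require Import structures.
From mathcomp Require Import all_boot all_order all_algebra.
From mathcomp Require Import all_classical all_reals all_analysis.
Set Implicit Arguments. Unset Strict Implicit. Unset Printing Implicit Defensive.
Import Order.TTheory GRing.Theory Num.Theory.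
Local Open Scope ring_scope.

(* Ground set {1,...,n} is modelled by 'I_n, with element k : 'I_n
   standing for k+1.  The pair {2i-1, 2i} (i = 1..m) becomes, for
   the 0-based index j = i-1 : 'I_m, the set {2j, 2j+1} of 'I_n. *)
Definition pair_set (n m : nat) (j : 'I_m) : {set 'I_n} :=
  [set k : 'I_n | (val k == 2 * val j)%N || (val k == (2 * val j).+1)%N].

Definition goodI (n m : nat) (S T : {set 'I_n}) : {set 'I_m} :=
  [set j : 'I_m | (#|pair_set n j :&: S| == 1)%N && (#|pair_set n j :&: T| == 1)%N].

Definition prob_ST (R : realType) (n a b : nat)
    (E : {set 'I_n} -> {set 'I_n} -> bool) : R :=
  (#|[set ST : {set 'I_n} * {set 'I_n} |
      [&& #|ST.1| == a, #|ST.2| == b & E ST.1 ST.2]]|)%:R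
  / (#|[set ST : {set 'I_n} * {set 'I_n} |
      (#|ST.1| == a) && (#|ST.2| == b)]|)%:R.

From HB Require Import structures.
From mathcomp Require Import all_boot all_order all_algebra.
From mathcomp Require Import all_classical all_reals all_analysis.
From mathcomp Require Import zify ring lra.
Import Order.TTheory GRing.Theory Num.Theory.

(* Replace the uniform a- and b-subsets by independent p- and q-random subsets,
   in which every element is kept independently.  Since a = pn is a mode of the
   binomial distribution, a fixed a-set has probability at least
   1 / ((n + 1) 'C(n, a)) under the product measure, i.e. at least 1/(n + 1)
   times its uniform probability; this costs the factor (n + 1)^2.  Under the
   product measure the m pairs are independent and each one lies in I with
   probability r = 4p(1-p)q(1-q), so for d >= 0 the exponential Markov
   inequality gives
     P[|I| <= (1-d) r m] <= e^{d (1-d) r m} E[e^{-d |I|}]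
                          = e^{d (1-d) r m} (1 - (1 - e^{-d}) r)^m,
   and e^{-d} <= 1 - d + d^2/2 turns this into e^{-d^2 r m / 2}. *)

Set Implicit Arguments. Unset Strict Implicit. Unset Printing Implicit Defensive.

Local Open Scope ring_scope.

Lemma expR_ge1Dx2 (R : realType) (x : R) : 0 <= x -> 1 + x + x ^+ 2 / 2 <= expR x.
Proof.
move=> x0; have -> : 1 + x + x ^+ 2 / 2 = series (exp_coeff x) 3.
  by rewrite /series /= !big_nat_recr //= big_geq // /exp_coeff /= expr0 expr1 !divr1 add0r.
apply: nondecreasing_cvgn_le; last exact: is_cvg_series_exp_coeff.
by apply: (nondecreasing_series (P := xpredT)) => k _ _; apply: exp_coeff_ge0.
Qed.

Lemma expRN_le (R : realType) (d : R) : 0 <= d -> expR (- d) <= 1 - d + d ^+ 2 / 2.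
Proof.
move=> d0; have ed_ge := expR_ge1Dx2 d0; have ed_gt0 := expR_gt0 d.
rewrite expRN -(ler_pM2l ed_gt0) mulfV ?gt_eqF //.
have d4 : 0 <= d ^+ 4 by rewrite exprn_ge0.
have : 0 <= (d - 1) ^+ 2 by apply: sqr_ge0.
by nra.
Qed.

Lemma indicator_le_expR (R : realType) (d c x : R) :
  0 <= d -> ((x <= c)%R%:R : R) <= expR (d * (c - x)).
Proof.
move=> d0; have [xc|_] := leP x c; last exact: expR_ge0.
by apply: le_trans (expR_ge1Dx _); rewrite lerDl mulr_ge0 // subr_ge0.
Qed.

Lemma chernoff_exponent_le (R : realType) m (d r : R) : 0 <= d -> 0 <= r <= 1 ->
  expR (d * ((1 - d) * (r * m%:R))) * (1 - (1 - expR (- d)) * r) ^+ m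
  <= expR (- (d ^+ 2 * (r * m%:R) / 2)).
Proof.
move=> d0 /andP[r0 r1]; set y := 1 - expR (- d).
have y0 : 0 <= y by rewrite subr_ge0 expR_le1 oppr_le0.
have y1 : y <= 1 by rewrite lerBlDr lerDl expR_ge0.
have y_ge : d - d ^+ 2 / 2 <= y by have := expRN_le d0; rewrite /y; lra.
have base : (1 - y * r) ^+ m <= expR (- (y * r)) ^+ m.
  apply: lerXn2r; rewrite ?nnegrE ?expR_ge0 //; first by rewrite subr_ge0 mulr_ile1.
  by have := expR_ge1Dx (- (y * r)); lra.
apply: le_trans (ler_wpM2l (expR_ge0 _) base) _.
rewrite -expRM_natl -expRD ler_expR.
have rm0 : 0 <= r * m%:R by rewrite mulr_ge0.
by nra.
Qed.

Lemma prod_onem_indicator (R : comPzRingType) (J : finType) (A : {set J}) (e : R) :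
  \prod_(j : J) (1 - (1 - e) * (j \in A)%:R) = e ^+ #|A|.
Proof.
rewrite -prodr_const [RHS]big_mkcond; apply: eq_bigr => j _.
by case: (j \in A); rewrite /= ?mulr1 ?mulr0 ?subr0 // subKr.
Qed.

Section BinomialMode.
Variables (R : realType) (n a : nat) (p : R).
Hypotheses (p01 : 0 < p < 1) (pn_a : p * n%:R = a%:R).

Let p_ge0 : 0 <= p. Proof. by case/andP: p01 => /ltW. Qed.
Let p_le1 : p <= 1. Proof. by case/andP: p01 => _ /ltW. Qed.

Lemma binomial_pmfE k : binomial_pmf n p k = 'C(n, k)%:R * p ^+ k * (1 - p) ^+ (n - k).
Proof. by rewrite /binomial_pmf -mulr_natl mulrA. Qed.

Lemma sum_binomial_pmf : \sum_(k < n.+1) binomial_pmf n p k = 1.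
Proof.
rewrite -(expr1n R n) -[X in X ^+ n](subrK p) exprDn.
by apply: eq_bigr => k _; rewrite binomial_pmfE -mulr_natl; ring.
Qed.

Lemma binomial_pmfS k : (k < n)%N ->
  binomial_pmf n p k.+1 * (k.+1%:R * (1 - p)) = binomial_pmf n p k * ((n - k)%:R * p).
Proof.
move=> lt_kn; have nk : (n - k = (n - k.+1).+1)%N by lia.
have binS : 'C(n, k.+1)%:R * k.+1%:R = 'C(n, k)%:R * (n - k)%:R :> R.
  by rewrite -!natrM mulnC mul_bin_left mulnC.
rewrite !binomial_pmfE [in (1 - p) ^+ (n - k)]nk !exprS.
transitivity ('C(n, k.+1)%:R * k.+1%:R * (p * p ^+ k * (1 - p) ^+ (n - k.+1) * (1 - p))).
  by ring.
by rewrite binS; ring.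
Qed.

Lemma binomial_mode_leq : (a <= n)%N.
Proof. by rewrite -(ler_nat R) -pn_a ler_piMl. Qed.

Lemma binomial_pmf_le_succ k : (k < a)%N -> binomial_pmf n p k <= binomial_pmf n p k.+1.
Proof.
move=> lt_ka; have lt_kn : (k < n)%N := leq_trans lt_ka binomial_mode_leq.
have X_gt0 : 0 < k.+1%:R * (1 - p) by rewrite mulr_gt0 // subr_gt0; case/andP: p01.
have XY : k.+1%:R * (1 - p) <= (n - k)%:R * p.
  have : k.+1%:R <= a%:R :> R by rewrite ler_nat.
  by rewrite natrB ?(ltnW lt_kn) // -natr1 -pn_a; move: p_ge0; nra.
rewrite -(ler_pM2r X_gt0) binomial_pmfS //.
by apply: ler_wpM2l XY; apply: binomial_pmf_ge0; rewrite p_ge0.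
Qed.

Lemma binomial_pmf_succ_le k : (a <= k < n)%N -> binomial_pmf n p k.+1 <= binomial_pmf n p k.
Proof.
case/andP=> le_ak lt_kn.
have X_gt0 : 0 < k.+1%:R * (1 - p) by rewrite mulr_gt0 // subr_gt0; case/andP: p01.
have YX : (n - k)%:R * p <= k.+1%:R * (1 - p).
  have : a%:R <= k%:R :> R by rewrite ler_nat.
  by rewrite natrB ?(ltnW lt_kn) // -natr1 -pn_a; move: p_le1; nra.
rewrite -(ler_pM2r X_gt0) binomial_pmfS //.
by apply: ler_wpM2l YX; apply: binomial_pmf_ge0; rewrite p_ge0.
Qed.

Lemma binomial_pmf_le_mode k : (k <= n)%N -> binomial_pmf n p k <= binomial_pmf n p a.
Proof.
move=> le_kn; case: (leqP k a) => [le_ka|lt_ak].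
  have up : {in [pred i | (i <= a)%N] &,
             {homo binomial_pmf n p : i j / (i <= j)%N >-> i <= j}}.
    apply: homo_leq_in => [x|y x z|i j|i]; rewrite ?inE.
    - exact: lexx.
    - exact: le_trans.
    - by move=> ? ? l; rewrite inE; lia.
    - by move=> _; apply: binomial_pmf_le_succ.
  by apply: up; rewrite ?inE.
have down : {in [pred i | (a <= i <= n)%N] &,
             {homo binomial_pmf n p : i j / (i <= j)%N >-> j <= i}}.
  apply: homo_leq_in => [x|y x z yx zy|i j|i]; rewrite ?inE.
  - exact: lexx.
  - exact: le_trans zy yx.
  - by move=> ? ? l; rewrite inE; lia.
  - by move=> /andP[le_ai _] /andP[_ lt_in]; apply: binomial_pmf_succ_le; rewrite le_ai.
by apply: down; rewrite ?inE ?leqnn ?binomial_mode_leq ?le_kn ?(ltnW lt_ak).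
Qed.

Lemma binomial_pmf_mode_ge : 1 <= (n%:R + 1) * binomial_pmf n p a.
Proof.
have -> : (n%:R + 1) * binomial_pmf n p a = \sum_(k < n.+1) binomial_pmf n p a.
  by rewrite sumr_const card_ord natr1 mulr_natl.
rewrite -sum_binomial_pmf; apply: ler_sum => k _.
by apply: binomial_pmf_le_mode; rewrite -ltnS.
Qed.

End BinomialMode.

Lemma card_set2I (T : finType) (i j : T) (A : {set T}) :
  i != j -> #|[set i; j] :&: A| = ((i \in A) + (j \in A))%N.
Proof.
move=> ij; rewrite -sum1_card.
rewrite (eq_bigl (fun x => (x \in [set i; j]) && (x \in A))) => [|x]; last by rewrite inE.
by rewrite big_mkcondr big_setU1 ?big_set1 ?inE //=; case: (i \in A); case: (j \in A).
Qed.

Section RandomSubset.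
Variables (R : realType) (n : nat).
Implicit Types (p q c y : R) (i : 'I_n) (S T P : {set 'I_n}) (f g : {set 'I_n} -> R).
Implicit Types (F G : {set 'I_n} -> {set 'I_n} -> R).

Definition bern_wt p S : R := \prod_(k : 'I_n) (if k \in S then p else 1 - p).

Definition Ebern p f : R := \sum_S bern_wt p S * f S.

Definition Ebern2 p q F : R := Ebern p (fun S => Ebern q (F S)).

Definition toggle i S : {set 'I_n} := if i \in S then S :\ i else i |: S.

Lemma in_toggle i k S : (k \in toggle i S) = (k == i) (+) (k \in S).
Proof.
by rewrite /toggle; case: ifP => iS; rewrite !inE; case: eqP => [->|]; rewrite ?iS.
Qed.

Lemma toggleK i : involutive (toggle i).
Proof. by move=> S; apply/setP => k; rewrite !in_toggle addbA addbb. Qed.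

Lemma setI_toggle i P S : i \notin P -> P :&: toggle i S = P :&: S.
Proof.
move=> iNP; apply/setP => k; rewrite !inE in_toggle.
by case: eqP => [->|]; rewrite ?(negbTE iNP).
Qed.

Lemma bern_wtE p S : bern_wt p S = p ^+ #|S| * (1 - p) ^+ (n - #|S|).
Proof.
rewrite /bern_wt (bigID (mem S)) /=.
rewrite (eq_bigr (fun=> p)) => [|k ->//]; rewrite prodr_const.
rewrite (eq_bigr (fun=> 1 - p)) => [|k /negbTE->//]; rewrite prodr_const.
have cardCS : #|[predC S]| = (n - #|S|)%N by have := cardC S; rewrite card_ord; lia.
by rewrite -cardCS.
Qed.

Lemma bern_wt_ge0 p S : 0 <= p <= 1 -> 0 <= bern_wt p S.
Proof.
by case/andP=> p0 p1; apply: prodr_ge0 => k _; case: ifP; rewrite ?subr_ge0.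
Qed.

Lemma sum_bern_wt p : \sum_S bern_wt p S = 1.
Proof.
rewrite -(sum_binomial_pmf n p).
rewrite (partition_big (fun S => inord #|S| : 'I_n.+1) xpredT) //=.
apply: eq_bigr => k _.
rewrite (eq_bigl (fun S => #|S| == k)) => [|S]; last first.
  by rewrite -(inj_eq val_inj) /= inordK // ltnS -[X in (_ <= X)%N](card_ord n) max_card.
rewrite (eq_bigr (fun=> p ^+ k * (1 - p) ^+ (n - k))) => [|S /eqP <-]; last exact: bern_wtE.
by rewrite sumr_const -(cardsE (fun S : {set 'I_n} => #|S| == k)) card_draws card_ord.
Qed.

Lemma eq_Ebern p f g : f =1 g -> Ebern p f = Ebern p g.
Proof. by move=> fg; apply: eq_bigr => S _; rewrite fg. Qed.

Lemma EbernZ p c f : Ebern p (fun S => c * f S) = c * Ebern p f.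
Proof. by rewrite /Ebern mulr_sumr; apply: eq_bigr => S _; rewrite mulrCA. Qed.

Lemma EbernD p f g : Ebern p (fun S => f S + g S) = Ebern p f + Ebern p g.
Proof. by rewrite /Ebern -big_split; apply: eq_bigr => S _; rewrite mulrDr. Qed.

Lemma EbernB p f g : Ebern p (fun S => f S - g S) = Ebern p f - Ebern p g.
Proof. by rewrite /Ebern -sumrB; apply: eq_bigr => S _; rewrite mulrBr. Qed.

Lemma Ebern_cst p c : Ebern p (fun=> c) = c.
Proof. by rewrite /Ebern -mulr_suml sum_bern_wt mul1r. Qed.

Lemma ler_Ebern p f g : 0 <= p <= 1 -> (forall S, f S <= g S) -> Ebern p f <= Ebern p g.
Proof. by move=> p01 fg; apply: ler_sum => S _; rewrite ler_wpM2l ?bern_wt_ge0. Qed.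

Lemma Ebern_mem p i f : (forall S, f (toggle i S) = f S) ->
  Ebern p (fun S => (i \in S)%:R * f S) = p * Ebern p f.
Proof.
move=> f_inv; pose g S := \prod_(k | k != i) (if k \in S then p else 1 - p) * f S.
have wtE S : bern_wt p S * f S = (if i \in S then p else 1 - p) * g S.
  by rewrite /bern_wt (bigD1 i) //= mulrA.
have g_inv S : g (toggle i S) = g S.
  rewrite /g f_inv; congr (_ * _); apply: eq_bigr => k ki.
  by rewrite in_toggle (negbTE ki).
pose sum_in := \sum_(S : {set 'I_n}) (i \in S)%:R * g S.
have sym : sum_in = \sum_(S : {set 'I_n}) (i \notin S)%:R * g S.
  rewrite /sum_in (reindex_inj (can_inj (toggleK i))) /=.
  by apply: eq_bigr => S _; rewrite g_inv in_toggle eqxx.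
have -> : Ebern p f = sum_in.
  transitivity (p * sum_in + (1 - p) * sum_in); last by ring.
  rewrite {2}sym /sum_in !mulr_sumr -big_split; apply: eq_bigr => S _.
  by rewrite wtE; case: (i \in S) => /=; ring.
rewrite /Ebern /sum_in mulr_sumr; apply: eq_bigr => S _.
by rewrite mulrCA wtE; case: (i \in S) => /=; ring.
Qed.

Lemma Ebern_card1 p P f : #|P| = 2 -> {in P, forall i S, f (toggle i S) = f S} ->
  Ebern p (fun S => (#|P :&: S| == 1)%:R * f S) = 2 * p * (1 - p) * Ebern p f.
Proof.
move=> /eqP/cards2P[i [j [ij ->]]] f_inv.
have fi S : f (toggle i S) = f S by apply: f_inv; rewrite !inE eqxx.
have fj S : f (toggle j S) = f S by apply: f_inv; rewrite !inE eqxx orbT.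
have fij S : (j \in toggle i S)%:R * f (toggle i S) = (j \in S)%:R * f S :> R.
  by rewrite fi in_toggle eq_sym (negbTE ij).
transitivity (Ebern p (fun S => (i \in S)%:R * f S) + Ebern p (fun S => (j \in S)%:R * f S)
              - 2 * Ebern p (fun S => (i \in S)%:R * ((j \in S)%:R * f S))).
  rewrite -EbernZ -EbernD -EbernB; apply: eq_Ebern => S.
  by rewrite card_set2I //; case: (i \in S); case: (j \in S) => /=; ring.
by rewrite !Ebern_mem //; ring.
Qed.

Lemma eq_Ebern2 p q F G : (forall S T, F S T = G S T) -> Ebern2 p q F = Ebern2 p q G.
Proof. by move=> FG; apply: eq_Ebern => S; apply: eq_Ebern => T; apply: FG. Qed.

Lemma Ebern2Z p q c F : Ebern2 p q (fun S T => c * F S T) = c * Ebern2 p q F.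
Proof. by rewrite -EbernZ; apply: eq_Ebern => S; rewrite EbernZ. Qed.

Lemma Ebern2_cst p q c : Ebern2 p q (fun _ _ => c) = c.
Proof. by rewrite /Ebern2 !Ebern_cst. Qed.

Lemma ler_Ebern2 p q F G : 0 <= p <= 1 -> 0 <= q <= 1 ->
  (forall S T, F S T <= G S T) -> Ebern2 p q F <= Ebern2 p q G.
Proof. by move=> p01 q01 FG; apply: ler_Ebern => // S; apply: ler_Ebern. Qed.

Lemma Ebern2_pair p q y P F : #|P| = 2 ->
    {in P, forall i S T, F (toggle i S) T = F S T} ->
    {in P, forall i S T, F S (toggle i T) = F S T} ->
  Ebern2 p q (fun S T => (1 - y * ((#|P :&: S| == 1) && (#|P :&: T| == 1))%:R) * F S T)
  = (1 - y * (2 * p * (1 - p)) * (2 * q * (1 - q))) * Ebern2 p q F.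
Proof.
move=> P2 FS FT.
have inner S : Ebern q (fun T => (#|P :&: T| == 1)%:R * F S T)
             = 2 * q * (1 - q) * Ebern q (F S).
  by apply: Ebern_card1 => // i Pi T; apply: FT.
have outer : Ebern p (fun S => (#|P :&: S| == 1)%:R * Ebern q (F S))
           = 2 * p * (1 - p) * Ebern2 p q F.
  by apply: Ebern_card1 => // i Pi S; apply: eq_Ebern => T; apply: FS.
transitivity (Ebern2 p q F - y * (2 * q * (1 - q))
                * Ebern p (fun S => (#|P :&: S| == 1)%:R * Ebern q (F S))).
  rewrite -EbernZ -EbernB; apply: eq_Ebern => S.
  transitivity (Ebern q (F S)
    - y * (#|P :&: S| == 1)%:R * Ebern q (fun T => (#|P :&: T| == 1)%:R * F S T)).
    rewrite -EbernZ -EbernB; apply: eq_Ebern => T.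
    by rewrite -mulnb natrM; ring.
  by rewrite inner; ring.
by rewrite outer; ring.
Qed.

End RandomSubset.

Section DisjointPairs.
Variables (R : realType) (n : nat) (J : finType) (P : J -> {set 'I_n}).
Hypothesis card_P : forall j, #|P j| = 2.
Hypothesis disjoint_P : forall j k, j != k -> [disjoint P j & P k].

Lemma Ebern2_prod_pairs_seq (p q y : R) (s : seq J) : uniq s ->
  Ebern2 p q (fun S T =>
    \prod_(j <- s) (1 - y * ((#|P j :&: S| == 1) && (#|P j :&: T| == 1))%:R))
  = (1 - y * (2 * p * (1 - p)) * (2 * q * (1 - q))) ^+ size s.
Proof.
elim: s => [_|x s IHs /andP[xNs s_uniq]].
  by under eq_Ebern2 => S T do rewrite big_nil; rewrite Ebern2_cst.
have notin_P i j : i \in P x -> j \in s -> i \notin P j.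
  move=> Pxi js; have xj : x != j by apply: contraNneq xNs => ->.
  by rewrite (disjointFr (disjoint_P xj) Pxi).
under eq_Ebern2 => S T do rewrite big_cons.
rewrite Ebern2_pair ?IHs ?exprS // => i Pxi S T; apply: eq_big_seq => j js;
  by rewrite setI_toggle ?notin_P.
Qed.

Lemma Ebern2_prod_pairs (p q y : R) :
  Ebern2 p q (fun S T =>
    \prod_(j : J) (1 - y * ((#|P j :&: S| == 1) && (#|P j :&: T| == 1))%:R))
  = (1 - y * (2 * p * (1 - p)) * (2 * q * (1 - q))) ^+ #|J|.
Proof. by rewrite cardT -Ebern2_prod_pairs_seq ?enum_uniq // enumT. Qed.

End DisjointPairs.

Lemma card_pair_set n m (j : 'I_m) : (2 * m <= n)%N -> #|pair_set n j| = 2.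
Proof.
move=> le2mn; apply/eqP/cards2P.
have lt1 : (2 * j < n)%N by have := ltn_ord j; lia.
have lt2 : ((2 * j).+1 < n)%N by have := ltn_ord j; lia.
exists (Ordinal lt1), (Ordinal lt2).
by split; [rewrite -(inj_eq val_inj) /= neq_ltn ltnSn | apply/setP => k; rewrite !inE].
Qed.

Lemma disjoint_pair_set n m (j k : 'I_m) :
  j != k -> [disjoint pair_set n j & pair_set n k].
Proof.
rewrite -(inj_eq val_inj) => /eqP jk; apply/pred0P => i /=; rewrite !inE.
by move: (val i) (val j) (val k) jk => x y z; lia.
Qed.

Lemma Ebern2_goodI_le (R : realType) n m (p q d c : R) : (2 * m <= n)%N ->
    0 <= p <= 1 -> 0 <= q <= 1 -> 0 <= d ->
  Ebern2 p q (fun S T => ((#|@goodI n m S T|%:R <= c)%R%:R : R))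
  <= expR (d * c) * (1 - (1 - expR (- d)) * (2 * p * (1 - p)) * (2 * q * (1 - q))) ^+ m.
Proof.
move=> le2mn p01 q01 d0.
have := Ebern2_prod_pairs (fun j => @card_pair_set n m j le2mn) (@disjoint_pair_set n m)
  p q (1 - expR (- d)).
rewrite card_ord => <-; rewrite -Ebern2Z; apply: ler_Ebern2 => // S T.
have -> : \prod_(j < m) (1 - (1 - expR (- d)) *
      ((#|pair_set n j :&: S| == 1) && (#|pair_set n j :&: T| == 1))%:R)
    = expR (- d) ^+ #|@goodI n m S T|.
  by rewrite -prod_onem_indicator; apply: eq_bigr => j _; rewrite inE.
apply: le_trans (indicator_le_expR _ _ d0) _.
have -> : d * (c - #|@goodI n m S T|%:R) = d * c + #|@goodI n m S T|%:R * - d by ring.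
by rewrite expRD expRM_natl.
Qed.

Lemma card_sized_pairs n a b :
  #|[set ST : {set 'I_n} * {set 'I_n} | (#|ST.1| == a) && (#|ST.2| == b)]| =
  ('C(n, a) * 'C(n, b))%N.
Proof.
have -> : [set ST : {set 'I_n} * {set 'I_n} | (#|ST.1| == a) && (#|ST.2| == b)] =
    finset.setX [set S : {set 'I_n} | #|S| == a] [set T : {set 'I_n} | #|T| == b].
  by apply/setP => -[S T]; rewrite !inE.
by rewrite cardsX !card_draws card_ord.
Qed.

Lemma card_event_le_Ebern2 (R : realType) n a b (p q : R)
    (E : {set 'I_n} -> {set 'I_n} -> bool) : 0 <= p <= 1 -> 0 <= q <= 1 ->
  #|[set ST : {set 'I_n} * {set 'I_n} | [&& #|ST.1| == a, #|ST.2| == b & E ST.1 ST.2]]|%:R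
    * (p ^+ a * (1 - p) ^+ (n - a)) * (q ^+ b * (1 - q) ^+ (n - b))
  <= Ebern2 p q (fun S T => (E S T)%:R).
Proof.
move=> p01 q01.
rewrite -sum1_card natr_sum big_mkcond /= !mulr_suml /Ebern2 /Ebern.
under [X in _ <= X]eq_bigr => S _ do rewrite mulr_sumr.
rewrite pair_bigA /=; apply: ler_sum => -[S T] _ /=; rewrite inE /=.
case: ifP => [/and3P[/eqP <- /eqP <- ->]|_]; first by rewrite !bern_wtE mul1r mulr1 mulrA.
by rewrite !mul0r !mulr_ge0 ?bern_wt_ge0.
Qed.

Lemma prob_ST_le_Ebern2 (R : realType) n a b (p q : R)
    (E : {set 'I_n} -> {set 'I_n} -> bool) :
    0 < p < 1 -> 0 < q < 1 -> p * n%:R = a%:R -> q * n%:R = b%:R ->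
  @prob_ST R n a b E <= (n%:R + 1) ^+ 2 * Ebern2 p q (fun S T => (E S T)%:R).
Proof.
move=> p01 q01 pn_a qn_b.
have p01' : 0 <= p <= 1 by case/andP: p01 => /ltW-> /ltW->.
have q01' : 0 <= q <= 1 by case/andP: q01 => /ltW-> /ltW->.
have mode_p := binomial_pmf_mode_ge p01 pn_a.
have mode_q := binomial_pmf_mode_ge q01 qn_b.
rewrite !binomial_pmfE -!mulrA in mode_p mode_q.
have C_gt0 : 0 < ('C(n, a) * 'C(n, b))%:R :> R.
  by rewrite ltr0n muln_gt0 !bin_gt0 (binomial_mode_leq p01 pn_a) (binomial_mode_leq q01 qn_b).
rewrite /prob_ST card_sized_pairs ler_pdivrMr //.
set N := #|_|%:R; have N_ge0 : 0 <= N by apply: ler0n.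
have Ebound := card_event_le_Ebern2 a b E p01' q01'; rewrite -/N in Ebound.
move: mode_p mode_q Ebound; set wa := p ^+ a * _; set wb := q ^+ b * _.
move=> mode_p mode_q Ebound.
apply: (@le_trans _ _ (N * (((n%:R + 1) * ('C(n, a)%:R * wa))
                            * ((n%:R + 1) * ('C(n, b)%:R * wb))))).
  by rewrite ler_peMr // mulr_ege1.
rewrite natrM [leRHS]mulrAC.
have -> : N * ((n%:R + 1) * ('C(n, a)%:R * wa) * ((n%:R + 1) * ('C(n, b)%:R * wb)))
    = (n%:R + 1) ^+ 2 * ('C(n, a)%:R * 'C(n, b)%:R) * (N * wa * wb) by ring.
by rewrite ler_wpM2l // mulr_ge0 ?exprn_ge0 ?addr_ge0 ?ler0n.
Qed.

Theorem proposition2p3 (R : realType) (m n : nat) (delta p q : R) (a b : nat) :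
  (0 < m)%N -> (0 < n)%N -> (2 * m <= n)%N ->
  0 < delta < 1 -> 0 < p < 1 -> 0 < q < 1 ->
  p * n%:R = a%:R -> q * n%:R = b%:R ->
  @prob_ST R n a b
    (fun S T => (#|@goodI n m S T|)%:R <= (1 - delta) * (4 * p * (1 - p) * q * (1 - q) * m%:R))
  <= (n%:R + 1) ^+ 2
     * expR (- (delta ^+ 2 * (4 * p * (1 - p) * q * (1 - q) * m%:R) / 2)).
Proof.
move=> _ _ le2mn /andP[d0 _] p01 q01 pn_a qn_b.
have p01' : 0 <= p <= 1 by case/andP: p01 => /ltW-> /ltW->.
have q01' : 0 <= q <= 1 by case/andP: q01 => /ltW-> /ltW->.
set r := 4 * p * (1 - p) * q * (1 - q).
have r01 : 0 <= r <= 1.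
  have varp : 0 <= p * (1 - p) <= 1 / 4.
    by case/andP: p01' => ? ?; apply/andP; split; have := sqr_ge0 (2 * p - 1); nra.
  have varq : 0 <= q * (1 - q) <= 1 / 4.
    by case/andP: q01' => ? ?; apply/andP; split; have := sqr_ge0 (2 * q - 1); nra.
  have -> : r = 4 * (p * (1 - p)) * (q * (1 - q)) by rewrite /r; ring.
  by move: varp varq => /andP[? ?] /andP[? ?]; apply/andP; split; nra.
apply: le_trans (prob_ST_le_Ebern2 _ p01 q01 pn_a qn_b) _.
rewrite ler_wpM2l ?exprn_ge0 ?addr_ge0 ?ler0n //.
apply: le_trans (Ebern2_goodI_le _ le2mn p01' q01' (ltW d0)) _.
have -> : 1 - (1 - expR (- delta)) * (2 * p * (1 - p)) * (2 * q * (1 - q))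
    = 1 - (1 - expR (- delta)) * r by rewrite /r; ring.
exact: (chernoff_exponent_le m (ltW d0) r01).
Qed.
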